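(* For $k\ge4$ and $d\in[d_{\mathrm{lbd}}(k),d_{\mathrm{ubd}}(k)]$, $|\Psi_d'(x)|<1$ for all $x\in[\frac12-\frac1{2^k},\frac12]$.
   Context: $\hat\Psi(x)=\frac{1-2x^{k-1}}{1-x^{k-1}}$, $\dot\Psi(v)=\frac{1-v^{d-1}}{2-v^{d-1}}$, $\Psi_d=\dot\Psi\circ\hat\Psi$ ($d$ real). $d_{\mathrm{lbd}}(4)=16.7$, $d_{\mathrm{lbd}}(k)=(2^{k-1}-2)k\log2$ for $k\ge5$; $d_{\mathrm{ubd}}(k)=2^{k-1}k\log2$. *)

From Stdlib Require Import Reals.
Open Scope R_scope.

Definition Psi_hat (k : nat) (x : R) : R :=
  (1 - 2 * x ^ (k - 1)) / (1 - x ^ (k - 1)).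

(* \dot\Psi(v) = (1 - v^{d-1}) / (2 - v^{d-1}), d real: real power v^{d-1}
   (meaningful for v > 0, which is the case on the relevant range). *)
Definition Psi_dot (d : R) (v : R) : R :=
  (1 - Rpower v (d - 1)) / (2 - Rpower v (d - 1)).

Definition Psi (k : nat) (d : R) (x : R) : R := Psi_dot d (Psi_hat k x).

Definition d_lbd (k : nat) : R :=
  if (k =? 4)%nat then 167 / 10
  else (2 ^ (k - 1) - 2) * INR k * ln 2.

Definition d_ubd (k : nat) : R := 2 ^ (k - 1) * INR k * ln 2.

(* Write y = x^(k-1), v = Psi_hat k x = (1 - 2y)/(1 - y), w = v^(d-1) and
   s = (d-1) y/(1-y).  By the chain rule
     Psi_d'(x) = s * w/(2-w)^2 * (k-1)/(x(1-2y))  >= 0.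
   Since ln v <= v - 1 we get w <= e^(-s), and t/(2-t)^2 is increasing on
   [0,1], so s w/(2-w)^2 <= s e^s/(2e^s-1)^2 < s/(4(e^s-1)).  Hence
   Psi_d'(x) < 1 as soon as (k-1)/(x(1-2y)) <= 4(e^s-1)/s; the right-hand
   side is bounded below by a Taylor polynomial in s, and s is bounded below
   using d >= d_lbd k, x >= 1/2 - 2^(-k) (with Bernoulli's inequality for
   k >= 5) and ln 2 >= 2/3. *)

From Stdlib Require Import Reals Lra Lia Psatz.
From Coquelicot Require Import Coquelicot.
Open Scope R_scope.

Lemma ln_le_sub_1 (t : R) : 0 < t -> ln t <= t - 1.
Proof.
  intros Ht. pose proof (exp_ineq1_le (ln t)) as H. rewrite exp_ln in H; lra.
Qed.

Lemma ln_ge_1_sub_inv (t : R) : 0 < t -> 1 - / t <= ln t.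
Proof.
  intros Ht.
  pose proof (ln_le_sub_1 (/ t) (Rinv_0_lt_compat t Ht)) as H.
  rewrite ln_Rinv in H by exact Ht. lra.
Qed.

Lemma ln2_ge : 2 / 3 <= ln 2.
Proof.
  (* (24/23)^16 <= 2 and ln (24/23) >= 1/24 *)
  apply Rle_trans with (ln ((24 / 23) ^ 16)).
  - rewrite ln_pow by lra.
    pose proof (ln_ge_1_sub_inv (24 / 23) ltac:(lra)) as H.
    replace (/ (24 / 23)) with (23 / 24) in H by field.
    simpl INR. lra.
  - apply ln_le; [apply pow_lt; lra | simpl; lra].
Qed.

Lemma exp_sub_1_ge (s : R) :
  0 <= s -> s * (1 + s / 2 + s ^ 2 / 6 + s ^ 3 / 24) <= exp s - 1.
Proof. intros Hs. pose proof (exp_ge_taylor s 4 Hs). simpl in *. lra. Qed.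

Lemma pow_1_sub_ge (a : R) (n : nat) : 0 <= a <= 1 -> 1 - INR n * a <= (1 - a) ^ n.
Proof.
  intros Ha. induction n as [|n IH]; [simpl; lra|].
  rewrite S_INR. simpl.
  assert (Hn : 0 <= INR n) by apply pos_INR.
  assert (Hstep : (1 - a) * (1 - INR n * a) <= (1 - a) * (1 - a) ^ n)
    by (apply Rmult_le_compat_l; lra).
  nra.
Qed.

Lemma pow2_ge_4n (n : nat) : (4 <= n)%nat -> 4 * INR n <= 2 ^ n.
Proof.
  intros Hn. induction Hn as [|n Hn IH]; [simpl; lra|].
  rewrite S_INR. simpl.
  assert (Hn4 : INR 4 <= INR n) by (apply le_INR; exact Hn).
  simpl in *. lra.
Qed.

Lemma pow_bounds_near_half (m : nat) (a x : R) :
  a = / 2 ^ m -> (1 - a) / 2 <= x <= 1 / 2 -> a * (1 - INR m * a) <= x ^ m <= a.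
Proof.
  intros Ha Hx.
  assert (Ha01 : 0 < a <= 1).
  { rewrite Ha, <- pow_inv. split; [apply pow_lt; lra|].
    rewrite <- (pow1 m). apply pow_incr. lra. }
  split.
  - apply Rle_trans with (((1 - a) / 2) ^ m); [|apply pow_incr; lra].
    unfold Rdiv. rewrite Rpow_mult_distr, pow_inv, <- Ha.
    pose proof (pow_1_sub_ge a m ltac:(lra)) as Hbernoulli. nra.
  - rewrite Ha, <- pow_inv. apply pow_incr. lra.
Qed.

Lemma derivable_pt_lim_Psi_hat (k : nat) (x : R) :
  x ^ (k - 1) <> 1 ->
  derivable_pt_lim (Psi_hat k) x (- (INR (k - 1) * x ^ (k - 2)) / (1 - x ^ (k - 1)) ^ 2).
Proof.
  intros Hy. apply is_derive_Reals. unfold Psi_hat.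
  auto_derive.
  - intros H. apply Hy. lra.
  - rewrite <- Nat.sub_succ_r. field. intros H. apply Hy. lra.
Qed.

Lemma derivable_pt_lim_Psi_dot (d v : R) :
  0 < v -> Rpower v (d - 1) <> 2 ->
  derivable_pt_lim (Psi_dot d) v
    (- ((d - 1) * Rpower v (d - 1) / v) / (2 - Rpower v (d - 1)) ^ 2).
Proof.
  intros Hv Hw. apply is_derive_Reals. unfold Psi_dot, Rpower in *.
  auto_derive.
  - repeat split; try exact Hv. intros H; apply Hw; lra.
  - field. split; [lra | intros H; apply Hw; lra].
Qed.

Lemma Rpower_le_exp (v e : R) :
  0 < v -> 0 <= e -> Rpower v e <= exp (- (e * (1 - v))).
Proof.
  intros Hv He. unfold Rpower.
  pose proof (ln_le_sub_1 v Hv) as Hln.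
  destruct (Rle_lt_or_eq_dec _ _ (Rmult_le_compat_l e _ _ He Hln)) as [Hlt | Heq].
  - left. apply exp_increasing. lra.
  - right. f_equal. lra.
Qed.

Lemma frac_sq_le (w u : R) :
  0 <= w <= u -> u <= 1 -> w / (2 - w) ^ 2 <= u / (2 - u) ^ 2.
Proof.
  intros Hwu Hu.
  apply Rmult_le_reg_r with ((2 - w) ^ 2 * (2 - u) ^ 2).
  { apply Rmult_lt_0_compat; apply pow_lt; lra. }
  replace (w / (2 - w) ^ 2 * ((2 - w) ^ 2 * (2 - u) ^ 2)) with (w * (2 - u) ^ 2)
    by (field; lra).
  replace (u / (2 - u) ^ 2 * ((2 - w) ^ 2 * (2 - u) ^ 2)) with (u * (2 - w) ^ 2)
    by (field; lra).
  assert (Hfac : u * (2 - w) ^ 2 - w * (2 - u) ^ 2 = (u - w) * (4 - u * w)) by ring.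
  assert (Hpos : 0 <= (u - w) * (4 - u * w)) by (apply Rmult_le_pos; nra).
  lra.
Qed.

Lemma mul_frac_sq_lt_1 (s w M : R) :
  0 <= s -> 0 <= w <= exp (- s) -> 0 <= M -> s * M <= 4 * (exp s - 1) ->
  s * (w / (2 - w) ^ 2) * M < 1.
Proof.
  intros Hs Hw HM HsM.
  set (E := exp s) in *.
  assert (HE : 1 <= E) by (pose proof (exp_ineq1_le s); unfold E; lra).
  rewrite exp_Ropp in Hw. fold E in Hw.
  assert (HE1 : / E <= 1) by (rewrite <- Rinv_1; apply Rinv_le_contravar; lra).
  assert (Hphi : w / (2 - w) ^ 2 <= E / (2 * E - 1) ^ 2).
  { replace (E / (2 * E - 1) ^ 2) with (/ E / (2 - / E) ^ 2) by (field; lra).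
    apply frac_sq_le; lra. }
  assert (Hphi0 : 0 <= w / (2 - w) ^ 2).
  { apply Rmult_le_pos; [lra | apply Rlt_le, Rinv_0_lt_compat, pow_lt; lra]. }
  apply Rle_lt_trans with (4 * (E - 1) * (E / (2 * E - 1) ^ 2)).
  - replace (s * (w / (2 - w) ^ 2) * M) with ((s * M) * (w / (2 - w) ^ 2)) by ring.
    apply Rmult_le_compat; nra.
  - (* 4 E (E - 1) = (2 E - 1)^2 - 1 *)
    apply Rmult_lt_reg_r with ((2 * E - 1) ^ 2); [nra|].
    replace (4 * (E - 1) * (E / (2 * E - 1) ^ 2) * (2 * E - 1) ^ 2)
      with (4 * (E - 1) * E) by (field; lra).
    nra.
Qed.

Lemma Psi_deriv_lt_1_criterion (k : nat) (d x s0 : R) :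
  (2 <= k)%nat -> 1 <= d -> 0 < x -> x ^ (k - 1) < 1 / 2 ->
  0 <= s0 <= (d - 1) * (x ^ (k - 1) / (1 - x ^ (k - 1))) ->
  INR (k - 1) / (x * (1 - 2 * x ^ (k - 1)))
    <= 4 * (1 + s0 / 2 + s0 ^ 2 / 6 + s0 ^ 3 / 24) ->
  exists l, derivable_pt_lim (Psi k d) x l /\ Rabs l < 1.
Proof.
  intros Hk Hd Hx Hy Hs0 HM.
  set (y := x ^ (k - 1)) in *.
  assert (Hy0 : 0 < y) by (apply pow_lt; exact Hx).
  assert (Hyx : y = x * x ^ (k - 2)).
  { unfold y. rewrite tech_pow_Rmult. f_equal. lia. }
  set (s := (d - 1) * (y / (1 - y))) in *.
  set (M := INR (k - 1) / (x * (1 - 2 * y))) in *.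
  set (v := Psi_hat k x).
  assert (Hv : v = (1 - 2 * y) / (1 - y)) by reflexivity.
  assert (Hv0 : 0 < v) by (rewrite Hv; apply Rdiv_lt_0_compat; lra).
  assert (Hs : s = (d - 1) * (1 - v)) by (unfold s; rewrite Hv; field; lra).
  set (w := Rpower v (d - 1)).
  assert (Hw0 : 0 < w) by apply exp_pos.
  assert (Hws : w <= exp (- s)) by (rewrite Hs; apply Rpower_le_exp; lra).
  assert (Hs_pos : 0 <= s).
  { unfold s. apply Rmult_le_pos; [lra | apply Rlt_le, Rdiv_lt_0_compat; lra]. }
  assert (Hw1 : w <= 1).
  { pose proof (exp_ineq1_le s). rewrite exp_Ropp in Hws.
    apply Rle_trans with (1 := Hws). rewrite <- Rinv_1. apply Rinv_le_contravar; lra. }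
  assert (HM0 : 0 <= M).
  { unfold M. apply Rmult_le_pos; [apply pos_INR | apply Rlt_le, Rinv_0_lt_compat; nra]. }
  exists (- ((d - 1) * w / v) / (2 - w) ^ 2
          * (- (INR (k - 1) * x ^ (k - 2)) / (1 - y) ^ 2)).
  split.
  { apply (derivable_pt_lim_comp (Psi_hat k) (Psi_dot d)).
    - apply derivable_pt_lim_Psi_hat. fold y; intros H; lra.
    - apply derivable_pt_lim_Psi_dot; [exact Hv0 | fold w; intros H; lra]. }
  replace (- ((d - 1) * w / v) / (2 - w) ^ 2
           * (- (INR (k - 1) * x ^ (k - 2)) / (1 - y) ^ 2))
    with (s * (w / (2 - w) ^ 2) * M).
  2: { unfold s, M. rewrite Hv, Hyx. field. repeat split; try lra; nra. }
  assert (HsM : s * M <= 4 * (exp s - 1)).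
  { pose proof (exp_sub_1_ge s Hs_pos).
    assert (Hsq : s0 ^ 2 <= s ^ 2) by (apply pow_incr; lra).
    assert (Hcube : s0 ^ 3 <= s ^ 3) by (apply pow_incr; lra).
    assert (HMs : M <= 4 * (1 + s / 2 + s ^ 2 / 6 + s ^ 3 / 24)) by lra.
    nra. }
  assert (Hl0 : 0 <= s * (w / (2 - w) ^ 2) * M).
  { apply Rmult_le_pos; [apply Rmult_le_pos|]; try lra.
    apply Rmult_le_pos; [lra | apply Rlt_le, Rinv_0_lt_compat, pow_lt; lra]. }
  rewrite Rabs_pos_eq by lra.
  apply mul_frac_sq_lt_1; lra.
Qed.

Lemma Psi_4_deriv_lt_1 (d x : R) :
  167 / 10 <= d -> 7 / 16 <= x <= 1 / 2 ->
  exists l, derivable_pt_lim (Psi 4 d) x l /\ Rabs l < 1.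
Proof.
  intros Hd Hx.
  assert (Hy_lo : 343 / 4096 <= x ^ 3).
  { replace (343 / 4096) with ((7 / 16) ^ 3) by field. apply pow_incr; lra. }
  assert (Hy_hi : x ^ 3 <= 1 / 8).
  { replace (1 / 8) with ((1 / 2) ^ 3) by field. apply pow_incr; lra. }
  apply (Psi_deriv_lt_1_criterion 4 d x (143 / 100)); change (4 - 1)%nat with 3%nat;
    set (y := x ^ 3) in *; try lia; try lra.
  - split; [lra|].
    assert (Hq : 343 / 3753 <= y / (1 - y)) by (apply -> Rle_div_r; lra).
    apply Rle_trans with (157 / 10 * (343 / 3753)); [lra | apply Rmult_le_compat; lra].
  - (* x (1 - 2 x^3) is increasing on [0, 1/2] *)
    assert (Hg : 9 / 25 <= x * (1 - 2 * y)).
    { unfold y. simpl.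
      assert (0 <= (x - 7 / 16) * (1 - 2 * (x * x * x + x * x * (7 / 16)
                                             + x * (7 / 16) ^ 2 + (7 / 16) ^ 3))).
      { apply Rmult_le_pos; [lra|]. nra. }
      nra. }
    apply Rle_trans with (25 / 3); [|lra].
    apply <- Rle_div_l; simpl; lra.
Qed.

Lemma Psi_deriv_lt_1_ge_5 (k : nat) (d x : R) :
  (5 <= k)%nat -> (2 ^ (k - 1) - 2) * INR k * ln 2 <= d ->
  1 / 2 - 1 / 2 ^ k <= x <= 1 / 2 ->
  exists l, derivable_pt_lim (Psi k d) x l /\ Rabs l < 1.
Proof.
  intros Hk Hd Hx.
  set (m := (k - 1)%nat) in *.
  assert (HK : INR k = INR m + 1) by (unfold m; rewrite <- S_INR; f_equal; lia).
  assert (Hm : 4 <= INR m).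
  { replace 4 with (INR 4) by (simpl; lra). apply le_INR. lia. }
  assert (HN : 4 * INR m <= 2 ^ m) by (apply pow2_ge_4n; lia).
  set (N := 2 ^ m) in *.
  set (a := / N).
  assert (HaN : a * N = 1) by (unfold a; field; lra).
  assert (Ha : 0 < a <= 1 / 16).
  { split; [apply Rinv_0_lt_compat; lra|].
    unfold a. replace (1 / 16) with (/ 16) by field. apply Rinv_le_contravar; lra. }
  assert (Hma : INR m * a <= 1 / 4) by nra.
  assert (Hx_lo : (1 - a) / 2 <= x).
  { replace (2 ^ k) with (2 * N) in Hx
      by (unfold N, m; rewrite tech_pow_Rmult; f_equal; lia).
    replace ((1 - a) / 2) with (1 / 2 - 1 / (2 * N)) by (unfold a; field; lra). lra. }
  destruct (pow_bounds_near_half m a x) as [Hy_lo Hy_hi]; [reflexivity | lra |].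
  set (y := x ^ m) in *.
  assert (Hd_lo : (N - 2) * INR k * (2 / 3) <= d).
  { pose proof ln2_ge. apply Rle_trans with (2 := Hd).
    apply Rmult_le_compat_l; [nra | lra]. }
  apply (Psi_deriv_lt_1_criterion k d x (2 / 5 * INR k)); fold m y; try lia; try lra.
  - nra.
  - split; [lra|].
    (* (N - 2) a = 1 - 2 a *)
    assert (Hdy : (INR k * (2 / 3) * (1 - 2 * a) - a) * (1 - INR m * a) <= (d - 1) * y).
    { replace ((INR k * (2 / 3) * (1 - 2 * a) - a) * (1 - INR m * a))
        with (((N - 2) * INR k * (2 / 3) - 1) * (a * (1 - INR m * a)))
        by (unfold a; field; lra).
      apply Rmult_le_compat; nra. }
    assert (HK5 : 5 <= INR k) by lra.
    assert (Hfirst : 7 / 12 * INR k - 1 / 16 <= INR k * (2 / 3) * (1 - 2 * a) - a)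
      by nra.
    assert (Hprod : (7 / 12 * INR k - 1 / 16) * (3 / 4)
                    <= (INR k * (2 / 3) * (1 - 2 * a) - a) * (1 - INR m * a))
      by (apply Rmult_le_compat; lra).
    assert (Hy_frac : (d - 1) * y <= (d - 1) * (y / (1 - y))).
    { apply Rmult_le_compat_l; [nra | apply -> Rle_div_r; nra]. }
    lra.
  - assert (Hg : 15 / 32 * (7 / 8) <= x * (1 - 2 * y))
      by (apply Rmult_le_compat; lra).
    apply Rle_trans with (5 / 2 * INR m).
    + apply <- Rle_div_l; nra.
    + (* a polynomial in INR k - 5 with nonnegative coefficients *)
      assert (Hcube : 0 <= (INR k - 5) * (INR k - 5) * (INR k - 5))
        by (apply Rmult_le_pos; [nra | lra]).
      nra.
Qed.

Theorem lemma3p3 (k : nat) (d : R) :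
  (4 <= k)%nat ->
  d_lbd k <= d <= d_ubd k ->
  forall x : R, 1 / 2 - 1 / 2 ^ k <= x <= 1 / 2 ->
  exists l : R, derivable_pt_lim (Psi k d) x l /\ Rabs l < 1.
Proof.
  intros Hk [Hd _] x Hx.
  unfold d_lbd in Hd.
  destruct (Nat.eq_dec k 4) as [-> | Hk4].
  - apply Psi_4_deriv_lt_1; simpl in Hd, Hx; lra.
  - rewrite (proj2 (Nat.eqb_neq k 4) Hk4) in Hd.
    apply Psi_deriv_lt_1_ge_5; [lia | exact Hd | exact Hx].
Qed.
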